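(* Consider the following algorithm (PMI) on training bags $B_1,\dots,B_N$, $B_i=[B_{i1},\dots,B_{iN_i}]$, $B_{ij}\in\mathbb{R}^d$, $n=\sum_iN_i$, with kernel $\ker$ (feature map $\Phi$) and parameter $\nu\in(0,1)$, and with access to an oracle returning the label ($\pm1$) of any queried instance. Repeat: (1) compute $\lambda$ minimizing $\sum_i\|\sum_j\lambda_{ij}\Phi(B_{ij})-\frac1N\sum_k\sum_j\lambda_{kj}\Phi(B_{kj})\|^2$ s.t. $\sum_j\lambda_{ij}=1$, $\lambda_{ij}\ge0$, and set $b_i=\sum_j\lambda_{ij}\Phi(B_{ij})$; (2) solve $\min_\alpha\frac12\sum_{i,j}\alpha_i\alpha_j\ker(b_i,b_j)$ s.t. $0\le\alpha_i\le\frac1{\nu N}$, $\sum_i\alpha_i=1$, giving $\rho$, $l(x)=\sum_j\alpha_j\sum_k\lambda_{jk}\ker(x,B_{jk})-\rho$ and $f(x)=\operatorname{sign}(l(x))$; (3)–(4) if some bag $B_i$ has $\alpha_i<\frac1{\nu N}$ and $\max_j f(B_{ij})=-1$, choose $s_i=\arg\max_j l(B_{ij})$ for every $i$, solve $\min_{\alpha'}\frac12\sum_{p,q}\alpha'_p\alpha'_q\ker(x_p,x_q)$ s.t. $0\le\alpha'_p\le\frac1{2\nu N}$, $\sum_p\alpha'_p=1$ over the $2N$ points $\{b_i\}\cup\{B_{is_i}\}$, and replace $l,f$ by the resulting $l'(x)=\sum_p\alpha'_p\ker(x,x_p)-\rho'$, $f=\operatorname{sign}(l')$; (6) if some bag has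 $f(B_{ij})=1$ for all its instances, stop; (7) query the label of $\arg\max_{i,j}\{l(B_{ij}) : l(B_{ij})\ge0\}$; (8) if it is positive, stop; otherwise remove from all bags every instance $B_{ij}$ with $f(B_{ij})=1$ and repeat from (1) (with $N_i$, $n$ updated). Then: if $\nu<\frac1N$, the maximum number of queried instances is $\min_{i=1,\dots,N}N_i-1$; otherwise the maximum number of queried instances is $\lceil\frac{n}{(1-\nu)N}\rceil-1$.
   Context: $N_i$, $n$ and $N$ in the conclusion refer to the initial training set. $\operatorname{sign}(y)=+1$ if $y\ge0$ and $-1$ otherwise; $\ker(x,y)=\Phi(x)\cdot\Phi(y)$, and kernel values involving virtual instances $b_i$ are expanded linearly, $\ker(b_i,b_j)=\sum_{k,r}\lambda_{ik}\lambda_{jr}\ker(B_{ik},B_{jr})$. $\rho$ is $\sum_i\alpha_i\ker(b_i,b_j)$ for any $j$ with $0<\alpha_j<\frac1{\nu N}$ (analogously $\rho'$). $\lceil x\rceil$ is the least integer not smaller than $x$. *)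

From HB Require Import structures.
From mathcomp Require Import all_boot all_order all_algebra.
From mathcomp Require Import reals.
Import Order.TTheory GRing.Theory Num.Theory.
Local Open Scope ring_scope.

(* Virtual instances
     b_i = sum_j lambda_ij Phi(B_ij) are genuine vectors of V, so
     ker(b_i, b_j) = dot b_i b_j (the linear expansion of the paper).
   - A current (shrinking) family of bags is  S : 'I_N -> seq X ;
     instance j of bag i is  nth 0 (S i) j  (j < size (S i)).
   - Non-uniquely determined quantities (argmins, argmaxes, the choice of
     j in the definition of rho) are modelled relationally: any admissible
     choice is allowed.  *)

Section PMI.
Variables (R : realType) (V : lmodType R) (dot : V -> V -> R).
Variables (d : nat) (Phi : 'rV[R]_d -> V) (nu : R) (N : nat).

Definition ker (x y : 'rV[R]_d) : R := dot (Phi x) (Phi y).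

Definition sgn (y : R) : int := if 0 <= y then 1%R else (-1)%R.

Definition inst (S : 'I_N -> seq 'rV[R]_d) (i : 'I_N) (j : nat) : 'rV[R]_d :=
  nth 0 (S i) j.

Definition lam_feasible (S : 'I_N -> seq 'rV[R]_d) (lam : 'I_N -> nat -> R) :=
  forall i : 'I_N,
    (forall j, (j < size (S i))%N -> 0 <= lam i j) /\
    \sum_(j < size (S i)) lam i j = 1.

Definition bvec (S : 'I_N -> seq 'rV[R]_d) (lam : 'I_N -> nat -> R) (i : 'I_N) : V :=
  \sum_(j < size (S i)) lam i j *: Phi (inst S i j).

Definition step1_obj (S : 'I_N -> seq 'rV[R]_d) (lam : 'I_N -> nat -> R) : R :=
  \sum_(i < N)
    (let v := bvec S lam i - N%:R^-1 *: \sum_(k < N) bvec S lam k in dot v v).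

Definition is_lambda (S : 'I_N -> seq 'rV[R]_d) (lam : 'I_N -> nat -> R) :=
  lam_feasible S lam /\
  forall lam', lam_feasible S lam' -> step1_obj S lam <= step1_obj S lam'.

Definition qp_feasible {I : finType} (C : R) (a : I -> R) :=
  (forall p, 0 <= a p <= C) /\ \sum_p a p = 1.

Definition qp_obj {I : finType} (pts : I -> V) (a : I -> R) : R :=
  2^-1 * \sum_p \sum_q a p * a q * dot (pts p) (pts q).

Definition is_qp_sol {I : finType} (C : R) (pts : I -> V) (a : I -> R) :=
  qp_feasible C a /\
  forall a', qp_feasible C a' -> qp_obj pts a <= qp_obj pts a'.

Definition is_rho {I : finType} (C : R) (pts : I -> V) (a : I -> R) (rho : R) :=
  exists q, 0 < a q < C /\ rho = \sum_p a p * dot (pts p) (pts q).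

Definition l_step2 (S : 'I_N -> seq 'rV[R]_d) (lam : 'I_N -> nat -> R)
    (alpha : 'I_N -> R) (rho : R) (x : 'rV[R]_d) : R :=
  \sum_(j < N) alpha j * \sum_(k < size (S j)) lam j k * ker x (inst S j k) - rho.

Definition pts2 (S : 'I_N -> seq 'rV[R]_d) (lam : 'I_N -> nat -> R)
    (s : 'I_N -> nat) (p : ('I_N + 'I_N)%type) : V :=
  match p with
  | inl i => bvec S lam i
  | inr i => Phi (inst S i (s i))
  end.

Definition l_step4 (S : 'I_N -> seq 'rV[R]_d) (lam : 'I_N -> nat -> R)
    (s : 'I_N -> nat) (alpha' : ('I_N + 'I_N)%type -> R) (rho' : R)
    (x : 'rV[R]_d) : R :=
  \sum_p alpha' p * dot (Phi x) (pts2 S lam s p) - rho'.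

(* One iteration (1)-(8) from bag family S that reaches step (7), queries
   the instance q, and (if q turns out negative) continues with bag family S'. *)
Definition pmi_iter (S : 'I_N -> seq 'rV[R]_d) (q : 'rV[R]_d)
    (S' : 'I_N -> seq 'rV[R]_d) :=
  exists (lam : 'I_N -> nat -> R) (alpha : 'I_N -> R) (rho : R)
         (lf : 'rV[R]_d -> R),
  is_lambda S lam /\
  is_qp_sol (nu * N%:R)^-1 (bvec S lam) alpha /\
  is_rho (nu * N%:R)^-1 (bvec S lam) alpha rho /\
  (* (3)-(4): lf is the decision function in force after step (4) *)
  (let l := l_step2 S lam alpha rho in
   let cond := exists i : 'I_N, alpha i < (nu * N%:R)^-1 /\
                 (forall j, (j < size (S i))%N -> sgn (l (inst S i j)) = (-1)%R) in
   (cond ->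
      exists (s : 'I_N -> nat) (alpha' : ('I_N + 'I_N)%type -> R) (rho' : R),
        (forall i, (s i < size (S i))%N /\
           forall j, (j < size (S i))%N -> l (inst S i j) <= l (inst S i (s i))) /\
        is_qp_sol (2 * nu * N%:R)^-1 (pts2 S lam s) alpha' /\
        is_rho (2 * nu * N%:R)^-1 (pts2 S lam s) alpha' rho' /\
        forall x, lf x = l_step4 S lam s alpha' rho' x) /\
   (~ cond -> forall x, lf x = l x)) /\
  ~ (exists i : 'I_N, forall j, (j < size (S i))%N -> sgn (lf (inst S i j)) = 1%R) /\
  (exists (i : 'I_N) j, (j < size (S i))%N /\ q = inst S i j /\ 0 <= lf q /\
     forall (i' : 'I_N) j', (j' < size (S i'))%N -> 0 <= lf (inst S i' j') ->
       lf (inst S i' j') <= lf q) /\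
  (forall i, S' i = [seq x <- S i | sgn (lf x) != 1%R]).

(* The algorithm, run on the bags B with oracle [label], queries (at least)
   m instances: m successive iterations each reach step (7); all but the
   last queried instance are labelled negative by the oracle. *)
Definition pmi_queries (label : 'rV[R]_d -> bool)
    (B : 'I_N -> seq 'rV[R]_d) (m : nat) :=
  exists (Ss : nat -> 'I_N -> seq 'rV[R]_d) (qs : nat -> 'rV[R]_d),
    (forall i, Ss 0%N i = B i) /\
    forall t, (t < m)%N ->
      pmi_iter (Ss t) (qs t) (Ss t.+1) /\
      ((t.+1 < m)%N -> label (qs t) = false).

End PMI.

Definition total_size (R : realType) (d N : nat) (B : 'I_N -> seq 'rV[R]_d) : nat :=
  (\sum_(i < N) size (B i))%N.

(* min_i N_i  (for N >= 1; the neutral element total_size B is >= every N_i) *)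
Definition min_size (R : realType) (d N : nat) (B : 'I_N -> seq 'rV[R]_d) : nat :=
  \big[minn/ total_size R d N B]_(i < N) size (B i).

Arguments pmi_queries {R V} dot {d} Phi nu {N} label B m.
Arguments total_size {R d N} B.
Arguments min_size {R d N} B.

From Pilot Require Import Defs.
From HB Require Import structures.
From mathcomp Require Import all_boot all_order all_algebra.
From mathcomp Require Import reals.
From mathcomp Require Import lra ring zify.
Import Order.TTheory GRing.Theory Num.Theory.
Local Open Scope ring_scope.

(** If [alpha] solves the dual problem of step (2) and [alpha_i] is below its
    cap [1/(nu N)], the optimality conditions give [l(b_i) >= 0].  Since [l] is
    affine in the feature space, [l(b_i)] is the [lambda]-average of the values
    [l(B_ij)], so some instance of bag [i] has [l >= 0].  Hence the test of
    step (3) fails, [f = sign l], and step (8) removes at least one instance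
    from every such bag, while step (6) guarantees that every bag keeps one.
    At most [nu N] weights reach the cap because they sum to [1], so each
    query removes at least [(1 - nu) N] instances; and if [nu < 1/N] no weight
    reaches the cap, so every bag loses an instance per query. *)

Lemma descent_bound {R : numDomainType} (x : nat -> R) {r : R} {m : nat} :
  (forall t, (t < m)%N -> x t.+1 + r <= x t) -> x m + m%:R * r <= x 0%N.
Proof.
elim: m => [|m IHm] step; first by rewrite mul0r addr0.
rewrite -nat1r mulrDl mul1r addrA.
apply: le_trans (IHm (fun t ht => step t (ltnW ht))).
by rewrite lerD2r step.
Qed.

Lemma sumr_delta {M : nmodType} {I : finType} (F : I -> M) (k : I) :
  \sum_p F p *+ (p == k) = F k.
Proof. by under eq_bigr do rewrite mulrb; rewrite -big_mkcond big_pred1_eq. Qed.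

Lemma exists_ge0_of_convex_comb {R : realDomainType} {n : nat}
    {w f : 'I_n -> R} :
  (forall j, 0 <= w j) -> \sum_j w j = 1 -> 0 <= \sum_j w j * f j ->
  exists j, 0 <= f j.
Proof.
move=> w_ge0 w_sum comb_ge0.
case: (pickP (fun j => 0 <= f j)) => [j fj_ge0|f_lt0]; first by exists j.
have [k wk_gt0] : exists k, 0 < w k.
  case: (pickP (fun k => 0 < w k)) => [k wk|w_eq0]; first by exists k.
  move: w_sum; rewrite big1 => [/eqP|j _]; first by rewrite eq_sym oner_eq0.
  by apply/eqP; rewrite eq_le w_ge0 andbT leNgt w_eq0.
move: comb_ge0; rewrite (bigD1 k) //= leNgt => /negP[].
have wf_lt0 : w k * f k < 0 by rewrite pmulr_rlt0 // ltNge f_lt0.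
have rest_le0 : \sum_(j | j != k) w j * f j <= 0.
  by apply: sumr_le0 => j _; rewrite mulr_ge0_le0 // ltW // ltNge f_lt0.
lra.
Qed.

Lemma card_capped_le {R : realType} {I : finType} {C : R} {a : I -> R} :
  0 < C -> qp_feasible R C a -> #|[pred p | C <= a p]|%:R <= C^-1.
Proof.
move=> C_gt0 [a_bound a_sum].
rewrite -(ler_pM2r C_gt0) mulVf ?gt_eqF // mulr_natl -sumr_const -a_sum.
rewrite [leRHS](bigID [pred p | C <= a p]) /= -[leLHS]addr0.
apply: lerD; first exact: ler_sum.
by apply: sumr_ge0 => p _; case/andP: (a_bound p).
Qed.

Lemma qp_feasible_le1 {R : realType} {I : finType} {C : R} {a : I -> R} p :
  qp_feasible R C a -> a p <= 1.
Proof.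
move=> [a_bound a_sum]; rewrite -a_sum (bigD1 p) //= lerDl.
by apply: sumr_ge0 => q _; case/andP: (a_bound q).
Qed.

Section InnerProduct.
Context {R : realType} {V : lmodType R} {dot : V -> V -> R}.
Hypothesis dot_sym : forall u v, dot u v = dot v u.
Hypothesis dot_lin : forall (a : R) u v w, dot (a *: u + v) w = a * dot u w + dot v w.

Lemma dot0l w : dot 0 w = 0.
Proof. by have := dot_lin 1 0 0 w; rewrite scaler0 addr0 mul1r => ?; lra. Qed.

Lemma dotDl u v w : dot (u + v) w = dot u w + dot v w.
Proof. by rewrite -[u in LHS]scale1r dot_lin mul1r. Qed.

Lemma dotZl a u w : dot (a *: u) w = a * dot u w.
Proof. by rewrite -[a *: u]addr0 dot_lin dot0l addr0. Qed.

Lemma dotBl u v w : dot (u - v) w = dot u w - dot v w.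
Proof. by rewrite dotDl -scaleN1r dotZl mulN1r. Qed.

Lemma dot_suml (I : Type) (r : seq I) (P : pred I) (F : I -> V) w :
  dot (\sum_(i <- r | P i) F i) w = \sum_(i <- r | P i) dot (F i) w.
Proof. exact: (big_morph (dot^~ w) (fun u v => dotDl u v w) (dot0l w)). Qed.

Lemma dotDr u v w : dot w (u + v) = dot w u + dot w v.
Proof. by rewrite !(dot_sym w) dotDl. Qed.

Lemma dotZr a u w : dot w (a *: u) = a * dot w u.
Proof. by rewrite !(dot_sym w) dotZl. Qed.

Lemma dotBr u v w : dot w (u - v) = dot w u - dot w v.
Proof. by rewrite !(dot_sym w) dotBl. Qed.

Lemma dot_sumr (I : Type) (r : seq I) (P : pred I) (F : I -> V) w :
  dot w (\sum_(i <- r | P i) F i) = \sum_(i <- r | P i) dot w (F i).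
Proof. by rewrite dot_sym dot_suml; apply: eq_bigr => i _; rewrite dot_sym. Qed.

Lemma dot_normDZ u v e :
  dot (u + e *: v) (u + e *: v) = dot u u + 2 * e * dot u v + e * e * dot v v.
Proof. by rewrite !(dotDl, dotDr, dotZl, dotZr) (dot_sym v u); ring. Qed.

Definition wsum {I : finType} (pts : I -> V) (a : I -> R) : V :=
  \sum_p a p *: pts p.

Lemma qp_objE {I : finType} (pts : I -> V) a :
  qp_obj R V dot pts a = 2^-1 * dot (wsum pts a) (wsum pts a).
Proof.
rewrite /qp_obj /wsum dot_suml; congr (_ * _); apply: eq_bigr => p _.
rewrite dotZl dot_sumr mulr_sumr; apply: eq_bigr => q _.
by rewrite dotZr mulrA.
Qed.

Lemma dot_wsuml {I : finType} (pts : I -> V) a v :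
  dot (wsum pts a) v = \sum_p a p * dot (pts p) v.
Proof. by rewrite /wsum dot_suml; apply: eq_bigr => p _; rewrite dotZl. Qed.

Lemma wsum_shift {I : finType} (pts : I -> V) a e (i q : I) :
  wsum pts (fun p => a p + e * ((p == i)%:R - (p == q)%:R)) =
  wsum pts a + e *: (pts i - pts q).
Proof.
rewrite /wsum -(sumr_delta pts i) -(sumr_delta pts q) -sumrB scaler_sumr.
rewrite -big_split; apply: eq_bigr => p _ /=.
by rewrite -!scaler_nat -scalerBl scalerA -scalerDl.
Qed.

Lemma qp_feasible_shift {I : finType} {C : R} {a : I -> R} e {i q : I} :
  qp_feasible R C a -> i != q -> 0 <= e -> e <= C - a i -> e <= a q ->
  qp_feasible R C (fun p => a p + e * ((p == i)%:R - (p == q)%:R)).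
Proof.
move=> [a_bound a_sum] iq e_ge0 e_le_i e_le_q; split => [p|].
  rewrite /=; case: (eqVneq p i) => [->|_].
    have /andP[? ?] := a_bound i.
    by rewrite (negbTE iq) subr0 mulr1; apply/andP; split; lra.
  case: (eqVneq p q) => [->|_].
    have /andP[? ?] := a_bound q.
    by rewrite sub0r mulrN1; apply/andP; split; lra.
  by rewrite subrr mulr0 addr0 a_bound.
rewrite big_split /= -mulr_sumr sumrB a_sum.
by rewrite !(sumr_delta (fun _ => 1)) subrr mulr0 addr0.
Qed.

Hypothesis dot_pos : forall v, 0 <= dot v v.

Lemma qp_sol_margin {I : finType} (C : R) (pts : I -> V) a q i :
  is_qp_sol R V dot C pts a -> 0 < a q < C -> a i < C ->
  dot (wsum pts a) (pts q) <= dot (wsum pts a) (pts i).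
Proof.
move=> [a_feas a_opt] /andP[aq_gt0 aq_ltC] ai_ltC.
rewrite leNgt; apply/negP => margin_lt.
have iq : i != q by apply: contraTneq margin_lt => ->; rewrite ltxx.
set W := wsum pts a; set D := pts i - pts q.
set A := dot W D; set Q := dot D D.
have A_lt0 : A < 0 by rewrite /A dotBr subr_lt0.
have Q_ge0 : 0 <= Q := dot_pos D.
(* moving weight [e] from [q] to [i] changes the objective by [e A + e^2 Q / 2] *)
set e := Num.min (Num.min (C - a i) (a q)) (- A / (Q + 1)).
have e_gt0 : 0 < e by rewrite !lt_min subr_gt0 ai_ltC aq_gt0 divr_gt0 //; lra.
have eQ : e * (Q + 1) <= - A by rewrite -ler_pdivlMr ?ge_min ?lexx ?orbT //; lra.
have e_le_i : e <= C - a i by rewrite !ge_min lexx.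
have e_le_q : e <= a q by rewrite !ge_min lexx orbT.
have := a_opt _ (qp_feasible_shift e a_feas iq (ltW e_gt0) e_le_i e_le_q).
rewrite !qp_objE wsum_shift dot_normDZ -/W -/D -/A -/Q => opt.
have : e * (e * Q) <= e * (- A - e) by apply: ler_wpM2l; lra.
nra.
Qed.

Lemma rho_le_margin {I : finType} {C : R} {pts : I -> V} {a rho} {i : I} :
  is_qp_sol R V dot C pts a -> is_rho R V dot C pts a rho -> a i < C ->
  rho <= dot (wsum pts a) (pts i).
Proof. by move=> sol [q [aq ->]]; rewrite -dot_wsuml; apply: qp_sol_margin. Qed.

Section PMI.
Context {d : nat} {Phi : 'rV[R]_d -> V} {nu : R} {N : nat}.

Local Notation inst := (inst R d N).
Local Notation bvec := (bvec R V d Phi N).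
Local Notation l_step2 := (l_step2 R V dot d Phi N).
Local Notation pmi_iter := (pmi_iter R V dot d Phi nu N).
Local Notation cap := ((nu * N%:R)^-1).

Lemma l_step2E S lam alpha rho x :
  l_step2 S lam alpha rho x = dot (wsum (bvec S lam) alpha) (Phi x) - rho.
Proof.
rewrite dot_wsuml; congr (_ - _); apply: eq_bigr => j _.
rewrite /Defs.bvec dot_suml; congr (_ * _); apply: eq_bigr => k _.
by rewrite dotZl /ker dot_sym.
Qed.

Lemma l_step2_avg S (lam : 'I_N -> nat -> R) alpha rho i :
  \sum_(j < size (S i)) lam i j = 1 ->
  \sum_(j < size (S i)) lam i j * l_step2 S lam alpha rho (inst S i j) =
  dot (wsum (bvec S lam) alpha) (bvec S lam i) - rho.
Proof.
move=> lam_sum; under eq_bigr do rewrite l_step2E mulrBr.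
rewrite sumrB -mulr_suml lam_sum mul1r /Defs.bvec dot_sumr; congr (_ - _).
by apply: eq_bigr => j _; rewrite dotZr.
Qed.

Lemma below_cap_nonneg_instance {C : R} {S lam alpha rho} i :
  lam_feasible R d N S lam -> is_qp_sol R V dot C (bvec S lam) alpha ->
  is_rho R V dot C (bvec S lam) alpha rho -> alpha i < C ->
  exists2 j, (j < size (S i))%N & 0 <= l_step2 S lam alpha rho (inst S i j).
Proof.
move=> lam_feas sol rho_def ai_ltC; have [lam_ge0 lam_sum] := lam_feas i.
have avg_ge0 : 0 <= \sum_(j < size (S i)) lam i j * l_step2 S lam alpha rho (inst S i j).
  by rewrite l_step2_avg // subr_ge0 (rho_le_margin sol rho_def ai_ltC).
have [j lj] := exists_ge0_of_convex_comb (fun j => lam_ge0 j (ltn_ord j)) lam_sum avg_ge0.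
by exists j.
Qed.

Lemma pmi_iter_size_le {S q S'} i :
  pmi_iter S q S' -> (size (S' i) <= size (S i))%N.
Proof.
by case=> [_ [_ [_ [lf [_ [_ [_ [_ [_ [_ ->]]]]]]]]]]; rewrite size_filter count_size.
Qed.

Lemma pmi_iter_nonempty {S q S'} i : pmi_iter S q S' -> (0 < size (S' i))%N.
Proof.
case=> [_ [_ [_ [lf [_ [_ [_ [_ [not_all_pos [_ ->]]]]]]]]]].
rewrite size_filter -has_count; apply/negPn/negP => /hasPn all_pos.
apply: not_all_pos; exists i => j lt_j.
by have := all_pos _ (mem_nth 0 lt_j); rewrite negbK => /eqP.
Qed.

Lemma pmi_iter_removes {S q S'} :
  pmi_iter S q S' -> exists2 alpha, qp_feasible R cap alpha &
    forall i, alpha i < cap -> (size (S' i) < size (S i))%N.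
Proof.
case=> lam [alpha [rho [lf [[lam_feas _] [sol [rho_def [[_ lf_def] [_ [_ S'_def]]]]]]]]].
have nonneg i := below_cap_nonneg_instance i lam_feas sol rho_def.
have lf_eq x : lf x = l_step2 S lam alpha rho x.
  apply: lf_def => -[i [ai_lt all_neg]].
  have [j lt_j lj] := nonneg i ai_lt.
  by move: (all_neg j lt_j); rewrite /sgn lj.
exists alpha => [|i ai_lt]; first by case: sol.
have [j lt_j lj] := nonneg i ai_lt.
rewrite S'_def size_filter -(count_predC (fun x => sgn R (lf x) != 1%R) (S i)).
rewrite -[X in (X < _)%N]addn0 ltn_add2l -has_count; apply/hasP.
by exists (inst S i j); [apply: mem_nth | rewrite /= negbK lf_eq /sgn lj].
Qed.

Lemma pmi_iter_shrinks_all {S q S'} i :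
  0 < nu * N%:R < 1 -> pmi_iter S q S' -> (size (S' i) < size (S i))%N.
Proof.
move=> /andP[nuN_gt0 nuN_lt1] /pmi_iter_removes [alpha feas]; apply.
by apply: le_lt_trans (qp_feasible_le1 i feas) _; rewrite invf_gt1.
Qed.

Lemma pmi_iter_total_size {S q S'} :
  0 < nu -> (0 < N)%N -> pmi_iter S q S' ->
  (total_size S')%:R + (1 - nu) * N%:R <= (total_size S)%:R :> R.
Proof.
move=> nu_gt0 N_gt0 iter.
have [alpha feas shrink] := pmi_iter_removes iter.
set P := [pred i | alpha i < cap].
have removed : (total_size S' + #|P| <= total_size S)%N.
  rewrite /total_size -sum1_card [X in (_ + X)%N]big_mkcond -big_split /=.
  apply: leq_sum => i _.
  rewrite inE; case: ifP => [/shrink|_]; first by rewrite addn1.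
  by rewrite addn0 (pmi_iter_size_le i iter).
have cap_gt0 : 0 < cap by rewrite invr_gt0 mulr_gt0 // ltr0n.
have capped : #|[predC P]|%:R <= nu * N%:R.
  have -> : #|[predC P]| = #|[pred p | cap <= alpha p]|.
    by apply: eq_card => p; rewrite !inE leNgt.
  by rewrite -[X in _ <= X]invrK; apply: card_capped_le.
have card_split := cardC P; rewrite card_ord in card_split.
move: removed card_split; rewrite -(ler_nat R) natrD => removed.
move/(congr1 (fun n => n%:R : R)); rewrite natrD => card_split.
rewrite mulrBl mul1r; lra.
Qed.

Section Run.
Context {Ss : nat -> 'I_N -> seq 'rV[R]_d} {qs : nat -> 'rV[R]_d} {m : nat}.
Hypothesis run : forall t, (t < m)%N -> pmi_iter (Ss t) (qs t) (Ss t.+1).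

Lemma pmi_run_nonempty i : (0 < size (Ss 0%N i))%N -> (0 < size (Ss m i))%N.
Proof. by case: m run => [|t] steps // _; apply: pmi_iter_nonempty (steps t _). Qed.

Lemma pmi_run_size i : 0 < nu * N%:R < 1 -> (m + size (Ss m i) <= size (Ss 0%N i))%N.
Proof.
move=> nuN.
have shrink t : (t < m)%N -> (size (Ss t.+1 i))%:R + 1 <= (size (Ss t i))%:R :> R.
  by move=> ht; rewrite natr1 ler_nat (pmi_iter_shrinks_all i nuN (run t ht)).
by have := descent_bound _ shrink; rewrite mulr1 -natrD ler_nat addnC.
Qed.

Lemma pmi_run_total_size : 0 < nu -> (0 < N)%N ->
  (total_size (Ss m))%:R + m%:R * ((1 - nu) * N%:R) <= (total_size (Ss 0%N))%:R :> R.
Proof.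
move=> nu_gt0 N_gt0; apply: (descent_bound (fun t => (total_size (Ss t))%:R)).
by move=> t ht; apply: pmi_iter_total_size nu_gt0 N_gt0 (run t ht).
Qed.

End Run.
End PMI.
End InnerProduct.

Lemma size_le_total_size {R : realType} {d N : nat} (B : 'I_N -> seq 'rV[R]_d) i :
  (size (B i) <= total_size B)%N.
Proof. by rewrite /total_size (bigD1 i) //= leq_addr. Qed.

Lemma leq_min_size {R : realType} {d N : nat} (B : 'I_N -> seq 'rV[R]_d) k :
  (0 < N)%N -> (forall i, k <= size (B i))%N -> (k <= min_size B)%N.
Proof.
move=> N_gt0 k_le; apply: (big_ind (fun x => k <= x)%N) => //.
- exact: leq_trans (k_le (Ordinal N_gt0)) (size_le_total_size B _).
- by move=> x y kx ky; rewrite leq_min kx ky.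
Qed.

Theorem theorem3
  (R : realType) (V : lmodType R) (dot : V -> V -> R)
  (dot_sym : forall u v, dot u v = dot v u)
  (dot_lin : forall (a : R) u v w, dot (a *: u + v) w = a * dot u w + dot v w)
  (dot_pos : forall v, 0 <= dot v v)
  (dot_def : forall v, dot v v = 0 -> v = 0)
  (d : nat) (Phi : 'rV[R]_d -> V) (nu : R) (hnu : 0 < nu < 1)
  (N : nat) (hN : (0 < N)%N)
  (B : 'I_N -> seq 'rV[R]_d) (hB : forall i, (0 < size (B i))%N)
  (label : 'rV[R]_d -> bool) (m : nat) :
  pmi_queries dot Phi nu label B m ->
  if nu < N%:R^-1 then (m <= min_size B - 1)%N
  else (m%:Z <= Num.ceil ((total_size B)%:R / ((1 - nu) * N%:R)) - 1)%R.
Proof.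
case=> Ss [qs [Ss0 run]].
have /andP[nu_gt0 nu_lt1] := hnu.
have steps t : (t < m)%N -> pmi_iter R V dot d Phi nu N (Ss t) (qs t) (Ss t.+1).
  by move=> /run[].
have nonempty i : (0 < size (Ss m i))%N by apply: (pmi_run_nonempty steps); rewrite Ss0.
case: ifP => [nu_small | _].
  have nuN : 0 < nu * N%:R < 1.
    by rewrite mulr_gt0 ?ltr0n //= -ltr_pdivlMr ?ltr0n // mul1r.
  suff : (m.+1 <= min_size B)%N by lia.
  apply: leq_min_size => // i; have := nonempty i.
  by have := pmi_run_size dot_sym dot_lin dot_pos steps i nuN; rewrite Ss0; lia.
have := pmi_run_total_size dot_sym dot_lin dot_pos steps nu_gt0 hN.
have -> : total_size (Ss 0%N) = total_size B by apply: eq_bigr => i _; rewrite Ss0.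
have : (1 <= total_size (Ss m))%N.
  exact: leq_trans (nonempty (Ordinal hN)) (size_le_total_size _ _).
rewrite -(ler_nat R) => total_ge1 bound.
set r := (1 - nu) * N%:R in bound *.
have m_lt : m%:R < (total_size B)%:R / r.
  by rewrite ltr_pdivlMr ?mulr_gt0 ?subr_gt0 ?ltr0n //; lra.
have : (m%:Z < Num.ceil ((total_size B)%:R / r))%R by rewrite ceil_gt_int.
lia.
Qed.
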